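(* Let $S$ be a finite set and let $\mathcal{F}\subseteq 2^S$ be a non-trivial family, and let $\mathcal{I}=\{Y\subseteq S\mid \exists X\in\mathcal{F},\ Y\subseteq X\}$ be the downset of $(2^S,\subseteq)$ generated by $\mathcal{F}$. Let $\mathcal{F}'=\{2^X\mid X\in\mathcal{F}\}$ (which is also non-trivial) and let $L$ be the intersection lattice of $\mathcal{F}'$. Then $\mathrm{ncpd}(\mathcal{I})=\mathrm{nci}(L)$.
   Context: A finite family $\mathcal{F}$ of sets is non-trivial if it is non-empty and no $X\in\mathcal{F}$ satisfies $X=\bigcup\mathcal{F}$. For such $\mathcal{F}$ and non-empty $\mathcal{T}\subseteq\mathcal{F}$, let $S_{\mathcal{T}}=\bigcap\mathcal{T}$, and let $S_\emptyset=\bigcup\mathcal{F}$. The intersection lattice of $\mathcal{F}$ is $\mathbb{L}_{\mathcal{F}}=(\{S_{\mathcal{T}}\mid\mathcal{T}\subseteq\mathcal{F}\},\subseteq)$, with greatest element $\hat 1=\bigcup\mathcal{F}$. The Möbius function of a finite poset $P$ is given for $x\le y$ by $\mu_P(y,y)=1$ and $\mu_P(x,y)=-\sum_{x<z\le y}\mu_P(z,y)$; $\mathrm{nci}(L)=\{U\in L\mid U\neq\hat 1,\ \mu_L(U,\hat 1)\neq 0\}$. For a configuration $\mathcal{C}\subseteq 2^S$, the generalized Möbius function $\hat\mu_{\mathcal{C}}:2^S\to\mathbb{Z}$ is defined by top-down induction: $\hat\mu_{\mathcal{C}}(X)=[X\in\mathcal{C}]-\sum_{X\subsetneq X'\subseteq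 S}\hat\mu_{\mathcal{C}}(X')$ (with $[X\in\mathcal{C}]\in\{0,1\}$ the indicator). The non-cancelling principal downsets are $\mathrm{ncpd}(\mathcal{C})=\{2^X\mid X\subseteq S,\ \hat\mu_{\mathcal{C}}(X)\neq 0\}$, where $2^X=\{Y\subseteq S\mid Y\subseteq X\}$. *)

From mathcomp Require Import all_boot all_order all_algebra.
Set Implicit Arguments. Unset Strict Implicit. Unset Printing Implicit Defensive.
Import GRing.Theory Num.Theory.
Local Open Scope ring_scope.

Definition nontrivial (T : finType) (G : {set {set T}}) : bool :=
  (G != set0) && [forall X in G, X != \bigcup_(A in G) A].

(* Intersection lattice of G (as a set of elements; ordered by inclusion):
   S_Tau = \bigcap Tau for nonempty Tau \subset G, and S_emptyset = \bigcup G. *)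
Definition int_lattice (T : finType) (G : {set {set T}}) : {set {set T}} :=
  [set (if Tau == set0 then \bigcup_(A in G) A else \bigcap_(A in Tau) A)
     | Tau in powerset G].

(* The fuel #|P| is always sufficient for x, y in P (strict chains in P
   have at most #|P| elements). *)
Fixpoint mob_fuel (T : finType) (P : {set {set T}}) (y : {set T}) (n : nat)
    (x : {set T}) : int :=
  match n with
  | 0 => 0
  | n'.+1 => if x == y then 1
             else - \sum_(z in P | (x \proper z) && (z \subset y)) mob_fuel P y n' z
  end.

Definition mobius (T : finType) (P : {set {set T}}) (x y : {set T}) : int :=
  mob_fuel P y #|P| x.

Definition nci (T : finType) (L : {set {set T}}) : {set {set T}} :=
  let top := \bigcup_(U in L) U in
  [set U in L | (U != top) && (mobius L U top != 0)].

(* Generalized Moebius function of a configuration C \subseteq 2^S, top-down: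
   hmu(X) = [X in C] - sum_{X \subsetneq X'} hmu(X').
   Fuel #|S|.+1 is always sufficient. *)
Fixpoint gmob_fuel (S : finType) (C : {set {set S}}) (n : nat) (X : {set S}) : int :=
  match n with
  | 0 => 0
  | n'.+1 => (X \in C)%:Z - \sum_(X' : {set S} | X \proper X') gmob_fuel C n' X'
  end.

Definition gmob (S : finType) (C : {set {set S}}) (X : {set S}) : int :=
  gmob_fuel C #|S|.+1 X.

Definition ncpd (S : finType) (C : {set {set S}}) : {set {set {set S}}} :=
  [set powerset X | X in [set X : {set S} | gmob C X != 0]].

Definition downset (S : finType) (F : {set {set S}}) : {set {set S}} :=
  [set Y : {set S} | [exists X in F, Y \subset X]].

(* Let D be the downset generated by F and L the intersection lattice of the
   principal downsets 2^X, X in F.  Besides its top element D, the lattice L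
   consists of the 2^Z for Z a flat, i.e. a nonempty intersection of members
   of F; nontriviality of F makes D itself non-principal.  For X in D, the flats
   containing X are those containing its closure, so the Moebius recursion at
   2^(closure X) < D gives sum_{Z flat, X <= Z} mu(2^Z, D) = -1.  Hence the
   function X |-> -mu(2^X, D) on flats, 0 elsewhere, has superset sums
   [X in D], which characterises the generalized Moebius function of D: its
   non-cancelling principal downsets are the non-cancelling elements of L
   below the top. *)

From mathcomp Require Import all_boot all_order all_algebra.
Set Implicit Arguments. Unset Strict Implicit. Unset Printing Implicit Defensive.
Import GRing.Theory.
Local Open Scope ring_scope.

Section GeneralizedMobius.
Variables (S : finType) (C : {set {set S}}).

Lemma card_setC_proper (X X' : {set S}) : X \proper X' -> (#|~: X'| < #|~: X|)%N.
Proof. by move=> ltXX'; apply: proper_card; rewrite properC. Qed.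

Lemma gmob_fuel_stable n m X : (#|~: X| < n)%N -> (#|~: X| < m)%N ->
  gmob_fuel C n X = gmob_fuel C m X.
Proof.
elim: n m X => [|n IHn] [|m] X //= ltXn ltXm.
congr (_ - _); apply: eq_bigr => X' /card_setC_proper ltX'X.
by apply: IHn; apply: leq_trans ltX'X _.
Qed.

Lemma gmobE X :
  gmob C X = (X \in C)%:Z - \sum_(X' : {set S} | X \proper X') gmob C X'.
Proof.
rewrite {1}/gmob /=; congr (_ - _); apply: eq_bigr => X' /card_setC_proper ltX'X.
by apply: gmob_fuel_stable; [apply: leq_trans ltX'X _ | ]; apply: max_card.
Qed.

Lemma gmob_unique (g : {set S} -> int) :
  (forall X : {set S}, \sum_(X' : {set S} | X \subset X') g X' = (X \in C)%:Z) ->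
  gmob C =1 g.
Proof.
move=> sum_g X; have [n] := ubnP #|~: X|; elim: n X => // n IHn X ltXn.
rewrite gmobE; have -> : \sum_(X' : {set S} | X \proper X') gmob C X' =
          \sum_(X' : {set S} | (X \subset X') && (X' != X)) g X'.
  apply: eq_big => [X' | X' ltXX']; first by rewrite properEneq eq_sym andbC.
  by apply: IHn; apply: leq_trans (card_setC_proper ltXX') _.
by rewrite -sum_g (bigD1 X) //= addrK.
Qed.

End GeneralizedMobius.

Section Mobius.
Variables (T : finType) (P : {set {set T}}).

Lemma card_above_proper (x z : {set T}) : z \in P -> x \proper z ->
  (#|[set w in P | z \proper w]| < #|[set w in P | x \proper w]|)%N.
Proof.
move=> zP ltxz; apply: proper_card; apply/properP; split.
  by apply/subsetP => w; rewrite !inE => /andP[-> /(proper_trans ltxz)].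
by exists z; rewrite !inE ?zP ?ltxz ?properxx.
Qed.

Lemma mob_fuel_stable (y : {set T}) n m (x : {set T}) :
  (#|[set w in P | x \proper w]| < n)%N -> (#|[set w in P | x \proper w]| < m)%N ->
  mob_fuel P y n x = mob_fuel P y m x.
Proof.
elim: n m x => [|n IHn] [|m] x //= ltxn ltxm.
case: eqP => // _; congr (- _); apply: eq_bigr => z /andP[zP /andP[ltxz _]].
by have ltzx := card_above_proper zP ltxz; apply: IHn; apply: leq_trans ltzx _.
Qed.

Lemma mobE (x y : {set T}) : x \in P ->
  mobius P x y = if x == y then 1 else
    - \sum_(z in P | (x \proper z) && (z \subset y)) mobius P z y.
Proof.
move=> xP; rewrite /mobius.
have : (#|[set w in P | x \proper w]| < #|P|)%N.
  apply: proper_card; apply/properP; split.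
    by apply/subsetP => w; rewrite inE => /andP[].
  by exists x; rewrite // inE properxx andbF.
case: #|P| => [|n] // ltxn; rewrite [LHS]/=.
case: eqP => // _; congr (- _); apply: eq_bigr => z /andP[zP /andP[ltxz _]].
have ltzx := card_above_proper zP ltxz.
by apply: mob_fuel_stable; apply: leq_trans ltzx _; rewrite // ltnW.
Qed.

Lemma mobius_sum (x y : {set T}) : x \in P -> x \subset y ->
  \sum_(z in P | (x \subset z) && (z \subset y)) mobius P z y = (x == y)%:Z.
Proof.
move=> xP lexy; rewrite (bigD1 x) /=; last by rewrite xP subxx.
rewrite mobE //; case: eqP => [<- | _].
  rewrite big1 ?addr0 // => z /andP[/andP[_ /andP[lexz lezx]]].
  by rewrite eqEsubset lezx lexz.
rewrite addrC; apply/eqP; rewrite subr_eq0; apply/eqP/eq_bigl => z.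
by rewrite properEneq eq_sym; case: (x != z); rewrite ?andbT ?andbF.
Qed.

End Mobius.

Lemma powerset_inj (S : finType) : injective (@powerset S).
Proof.
move=> X Y eXY; apply/eqP.
by rewrite eqEsubset -powersetS eXY subxx -powersetS -eXY subxx.
Qed.

Lemma powerset_bigcap (S : finType) (T : {set {set S}}) :
  powerset (\bigcap_(A in T) A) = \bigcap_(B in @powerset S @: T) B.
Proof.
rewrite big_imset /=; last exact: in2W (@powerset_inj S).
exact: (big_morph _ (@powersetI S) (powersetT S)).
Qed.

Section IntersectionLatticeOfPrincipalDownsets.
Variables (S : finType) (F : {set {set S}}).

Definition flats :=
  [set \bigcap_(A in T) A | T : {set {set S}} in powerset F & T != set0].

Definition closure (X : {set S}) := \bigcap_(A in F | X \subset A) A.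

Let L := int_lattice [set powerset X | X in F].

Lemma downset_closed (X Y : {set S}) :
  Y \subset X -> X \in downset F -> Y \in downset F.
Proof.
move=> leYX; rewrite !inE => /existsP[A /andP[AF leXA]].
by apply/existsP; exists A; rewrite AF (subset_trans leYX).
Qed.

Lemma powerset_sub_downset (X : {set S}) :
  (powerset X \subset downset F) = (X \in downset F).
Proof.
apply/subsetP/idP => [|XD Y]; first by apply; rewrite powersetE.
by rewrite powersetE => leYX; apply: downset_closed XD.
Qed.

Lemma flat_in_downset (Z : {set S}) : Z \in flats -> Z \in downset F.
Proof.
case/imsetP => T; rewrite inE powersetE => /andP[leTF /set0Pn[A AT]] ->.
by rewrite inE; apply/existsP; exists A; rewrite (subsetP leTF) //= bigcap_inf.
Qed.

Lemma closure_flat (X : {set S}) : X \in downset F -> closure X \in flats.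
Proof.
rewrite inE => /existsP[A /andP[AF leXA]].
apply/imsetP; exists [set A in F | X \subset A]; last by apply: eq_bigl => B; rewrite inE.
rewrite inE powersetE; apply/andP; split; last by apply/set0Pn; exists A; rewrite inE AF.
by apply/subsetP => B; rewrite inE => /andP[].
Qed.

Lemma sub_closure (X : {set S}) : X \subset closure X.
Proof. by apply/bigcapsP => A /andP[]. Qed.

Lemma closure_sub_flat (X Z : {set S}) :
  Z \in flats -> (closure X \subset Z) = (X \subset Z).
Proof.
case/imsetP => T; rewrite inE powersetE => /andP[leTF _] ->.
apply/idP/idP => [|leXT]; first exact: subset_trans (sub_closure X).
apply/bigcapsP => A AT; apply: bigcap_inf.
by rewrite (subsetP leTF) //= (subset_trans leXT) // bigcap_inf.
Qed.

Lemma bigcup_powerset : \bigcup_(A in [set powerset X | X in F]) A = downset F.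
Proof.
apply/setP => Y; rewrite inE; apply/bigcupP/existsP.
  by case=> _ /imsetP[X XF ->]; rewrite powersetE => leYX; exists X; rewrite XF.
case=> X /andP[XF leYX]; exists (powerset X); first exact: imset_f.
by rewrite powersetE.
Qed.

Lemma int_lattice_powersetE :
  L = downset F |: [set powerset Z | Z in flats].
Proof.
apply/setP => U; apply/imsetP/setU1P => [[T] | [-> | /imsetP[Z /imsetP[T]]]].
- rewrite powersetE => leT ->; case: eqP => [_ | /eqP T0].
    by left; exact: bigcup_powerset.
  right; pose T' := [set A in F | powerset A \in T].
  have eT : T = [set powerset A | A in T'].
    apply/setP => B; apply/idP/imsetP => [BT | [A]].
      by have /imsetP[A AF eB] := subsetP leT B BT; exists A; rewrite // inE AF -eB.
    by rewrite inE => /andP[_ AT] ->.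
  apply/imsetP; exists (\bigcap_(A in T') A); last by rewrite eT powerset_bigcap.
  apply/imsetP; exists T' => //; rewrite inE powersetE -(imset_eq0 (@powerset S)) -eT T0.
  by rewrite andbT; apply/subsetP => A; rewrite inE => /andP[].
- by exists set0; rewrite ?powersetE ?sub0set // eqxx bigcup_powerset.
- rewrite inE powersetE => /andP[leTF T0] -> ->; exists [set powerset A | A in T].
    by rewrite powersetE imsetS.
  by rewrite imset_eq0 (negbTE T0) powerset_bigcap.
Qed.

Lemma top_int_lattice : \bigcup_(U in L) U = downset F.
Proof.
rewrite int_lattice_powersetE; apply/eqP; rewrite eqEsubset; apply/andP; split.
  apply/bigcupsP => U /setU1P[-> // | /imsetP[Z /flat_in_downset ZD ->]].
  by rewrite powerset_sub_downset.
by apply: (bigcup_sup (downset F)); rewrite setU11.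
Qed.

Lemma lattice_sub_downset U : U \in L -> U \subset downset F.
Proof. by move=> UL; rewrite -top_int_lattice bigcup_sup. Qed.

Lemma downset_in_lattice : downset F \in L.
Proof. by rewrite int_lattice_powersetE setU11. Qed.

Lemma powerset_flat_in_lattice Z : Z \in flats -> powerset Z \in L.
Proof. by move=> Zf; rewrite int_lattice_powersetE setU1r // imset_f. Qed.

Hypothesis ntF : nontrivial F.

Lemma downset_neq_powerset (Z : {set S}) : downset F != powerset Z.
Proof.
case/andP: ntF => _ /forallP ntF'; apply/eqP => eD.
have : Z \in downset F by rewrite eD powersetE.
rewrite inE => /existsP[X /andP[XF leZX]].
have leFZ A : A \in F -> A \subset Z.
  by move=> AF; rewrite -powersetE -eD inE; apply/existsP; exists A; rewrite AF subxx.
move/implyP: (ntF' X) => /(_ XF); rewrite eqEsubset bigcup_sup //= => /negP; apply.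
by apply/bigcupsP => A /leFZ leAZ; apply: subset_trans leAZ leZX.
Qed.

Lemma sum_int_lattice_above (R : nmodType) (f : {set {set S}} -> R) (X : {set S}) :
  X \in downset F ->
  \sum_(U in L | powerset X \subset U) f U =
  f (downset F) + \sum_(Z in flats | X \subset Z) f (powerset Z).
Proof.
move=> XD; rewrite int_lattice_powersetE big_mkcondr big_setU1 /=; last first.
  by apply/imsetP => -[Z _ /eqP]; rewrite (negbTE (downset_neq_powerset Z)).
rewrite powerset_sub_downset XD big_imset /=; last exact: in2W (@powerset_inj S).
by rewrite -big_mkcondr; congr (_ + _); apply: eq_bigl => Z; rewrite powersetS.
Qed.

Lemma sum_mobius_flats_above (X : {set S}) : X \in downset F ->
  \sum_(Z in flats | X \subset Z) mobius L (powerset Z) (downset F) = -1.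
Proof.
move=> XD; have clXf := closure_flat XD; have clXD := flat_in_downset clXf.
have := mobius_sum (powerset_flat_in_lattice clXf)
  (etrans (powerset_sub_downset _) clXD).
rewrite eq_sym (negbTE (downset_neq_powerset _)).
rewrite (eq_bigl (fun U => (U \in L) && (powerset (closure X) \subset U))); last first.
  by move=> U; case: (boolP (U \in L)) => UL; rewrite //= (lattice_sub_downset UL) andbT.
rewrite sum_int_lattice_above // mobE ?downset_in_lattice // eqxx.
move/eqP; rewrite addrC addr_eq0 => /eqP <-; apply: eq_bigl => Z.
by case: (boolP (Z \in flats)) => Zf; rewrite //= closure_sub_flat.
Qed.

Lemma gmob_downset :
  gmob (downset F) =1 fun X =>
    if X \in flats then - mobius L (powerset X) (downset F) else 0.
Proof.
apply: gmob_unique => X; rewrite -big_mkcondr sumrN /=.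
case: (boolP (X \in downset F)) => XD; last first.
  rewrite big1 ?oppr0 // => Z /andP[leXZ /flat_in_downset ZD].
  by case/negP: XD; apply: downset_closed leXZ ZD.
rewrite (eq_bigl (fun Z => (Z \in flats) && (X \subset Z))) => [|Z]; last exact: andbC.
by rewrite sum_mobius_flats_above ?opprK.
Qed.

Lemma ncpd_downset : ncpd (downset F) =
  [set powerset Z | Z in flats & mobius L (powerset Z) (downset F) != 0].
Proof.
rewrite /ncpd; congr [set powerset Z | Z in pred_of_set _]; apply/setP => Z.
by rewrite !inE gmob_downset; case: (Z \in flats); rewrite ?oppr_eq0 ?eqxx.
Qed.

Lemma nci_int_lattice : nci L =
  [set powerset Z | Z in flats & mobius L (powerset Z) (downset F) != 0].
Proof.
rewrite /nci top_int_lattice; apply/setP => U; rewrite inE.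
apply/andP/imsetP => [[] | [Z] ].
  rewrite [in U \in _]int_lattice_powersetE => /setU1P[-> | /imsetP[Z Zf ->]].
    by rewrite eqxx.
  by case/andP=> _ muZ; exists Z; rewrite // inE Zf.
rewrite inE => /andP[Zf muZ] ->.
by rewrite powerset_flat_in_lattice // eq_sym downset_neq_powerset.
Qed.

End IntersectionLatticeOfPrincipalDownsets.

Theorem lemma5p5 (S : finType) (F : {set {set S}}) :
  nontrivial F ->
  ncpd (downset F) = nci (int_lattice [set powerset X | X in F]).
Proof. by move=> ntF; rewrite ncpd_downset // nci_int_lattice. Qed.
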